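(* Let $\mathbf{S}=(S_n:n\ge1)\sim L(2,2,p)$ with $p=\sqrt2-1$, and let $x$ be a positive integer. Then $$\mathbb{P}(S_n\ge x\text{ for some }n\ge1)=\mathbb{P}(S_n\le -x\text{ for some }n\ge1)=1.$$
   Context: Ladder chain: let $\xi_1,\xi_2,\dots$ be i.i.d. with values in $\{1,-1\}$, $\mathbb{P}(\xi_i=1)=p$, $\mathbb{P}(\xi_i=-1)=1-p$, and let $r,s$ be positive integers. Define $X_k=-1$ if $\xi_k=-1$; $X_k=s$ if $k\ge r$ and $\xi_k=\xi_{k-1}=\dots=\xi_{k-r+1}=1$; and $X_k=1$ otherwise. Let $S_n=X_1+\dots+X_n$. The process $\mathbf{S}=(S_n:n\ge1)$ is called a ladder chain of order $r$, step $s$ and probability $p$, written $\mathbf{S}\sim L(r,s,p)$. Thus for $L(2,2,p)$: $X_k=-1$ if $\xi_k=-1$, $X_k=2$ if $\xi_k=\xi_{k-1}=1$ ($k\ge2$), and $X_k=1$ otherwise. *)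

From HB Require Import structures.
From mathcomp Require Import all_boot all_order all_algebra.
From mathcomp Require Import all_classical all_reals all_analysis.
Set Implicit Arguments. Unset Strict Implicit. Unset Printing Implicit Defensive.
Import Order.TTheory GRing.Theory Num.Theory.
Local Open Scope classical_set_scope.
Local Open Scope ring_scope.

(* Indices are 0-based: xi k here is the paper's xi_{k+1}. *)

(** Mutual independence of a sequence of real random variables:
    for every n and every measurable B_0,...,B_{n-1},
    P(xi_0 in B_0, ..., xi_{n-1} in B_{n-1}) = prod_i P(xi_i in B_i).
    (Taking B_i = setT recovers every finite subfamily.) *)
Definition mutually_independent_seq {d} {T : measurableType d} {R : realType}
    (P : probability T R) (xi : nat -> T -> R) : Prop :=
  forall (n : nat) (B : nat -> set R),
    (forall i, measurable (B i)) ->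
    P (\bigcap_(i in [set i | (i < n)%N]) (xi i @^-1` B i)) =
    (\prod_(i < n) P (xi i @^-1` B i))%E.

Definition iid_pm1 {d} {T : measurableType d} {R : realType}
    (P : probability T R) (p : R) (xi : nat -> T -> R) : Prop :=
  [/\ (forall i, measurable_fun setT (xi i)),
      (forall i t, xi i t = 1 \/ xi i t = -1),
      (forall i, P (xi i @^-1` [set 1]) = p%:E) &
      mutually_independent_seq P xi].

Definition ladder_step {T : Type} {R : realType} (r s : nat)
    (xi : nat -> T -> R) (k : nat) (t : T) : R :=
  if xi k t == -1 then -1
  else if ((r <= k.+1)%N && [forall j : 'I_r, xi (k - j)%N t == 1]) then s%:R
  else 1.

Definition ladder_sum {T : Type} {R : realType} (r s : nat)
    (xi : nat -> T -> R) (n : nat) (t : T) : R :=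
  \sum_(k < n) ladder_step r s xi k t.

From HB Require Import structures.
From mathcomp Require Import all_boot all_order all_algebra.
From mathcomp Require Import all_classical all_reals all_analysis.
From mathcomp Require Import ring lra.
Set Implicit Arguments. Unset Strict Implicit. Unset Printing Implicit Defensive.
Import Order.TTheory GRing.Theory Num.Theory.
Local Open Scope classical_set_scope.
Local Open Scope ring_scope.

(* For p = sqrt 2 - 1, i.e. p^2 + 2p = 1, the position plus p (counted only when the
   last step went up) is a martingale whose square grows by at least 1 per step in
   expectation.  Stop the chain when it leaves the window (-a, b).  Optional stopping
   bounds the probability of leaving below -a by (b + 3)/a and of leaving above b by
   (a + 1)/b, and the growth of the square bounds the probability of still being
   inside after N steps by (a + b + 3)^2/N.  Letting N and then the far end of the
   window go to infinity gives both statements.  All probabilities involved depend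
   on finitely many signs, so they are computed as finite sums over sign words. *)

Fixpoint bool_seqs (N : nat) : seq (seq bool) :=
  if N is N'.+1 then [seq true :: w | w <- bool_seqs N'] ++ [seq false :: w | w <- bool_seqs N']
  else [:: [::]].

Lemma bool_seqs_uniq N : uniq (bool_seqs N).
Proof.
elim: N => [|N IH] //=; have cons_inj (c : bool) : injective (cons c) by move=> ? ? [].
rewrite cat_uniq !map_inj_uniq ?IH //= andbT.
by apply/hasPn => _ /mapP[w _ ->]; apply/mapP => -[].
Qed.

Lemma mem_bool_seqs N w : (w \in bool_seqs N) = (size w == N).
Proof.
elim: N w => [|N IH] [|c w] //=; rewrite mem_cat.
  by apply/orP => -[] /mapP[].
have cons_inj (c' : bool) : injective (cons c') by move=> ? ? [].
have mem_cons_map c' : (c' :: w \in [seq ~~ c' :: v | v <- bool_seqs N]) = false.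
  by apply/mapP => -[] ? _ []; case: c'.
rewrite eqSS -IH; case: c; rewrite mem_map //.
  by rewrite (mem_cons_map true) orbF.
by rewrite (mem_cons_map false).
Qed.

Section CoinExpectation.
Variables (R : realType) (p : R).
Implicit Types (N : nat) (f g : seq bool -> R).

Definition coin_weight (w : seq bool) : R := \prod_(c <- w) (if c then p else 1 - p).

Fixpoint coin_expect N f : R :=
  if N is N'.+1 then
    p * coin_expect N' (fun w => f (true :: w)) + (1 - p) * coin_expect N' (fun w => f (false :: w))
  else f [::].

Lemma coin_expect_cst N c : coin_expect N (fun=> c) = c.
Proof. by elim: N => [|N IH] //=; rewrite IH; ring. Qed.

Lemma coin_expectD N f g :
  coin_expect N (fun w => f w + g w) = coin_expect N f + coin_expect N g.
Proof. by elim: N f g => [|N IH] f g //=; rewrite !IH; ring. Qed.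

Lemma coin_expectZ N c f : coin_expect N (fun w => c * f w) = c * coin_expect N f.
Proof. by elim: N f => [|N IH] f //=; rewrite !IH; ring. Qed.

Lemma coin_expectE N f : coin_expect N f = \sum_(w <- bool_seqs N) coin_weight w * f w.
Proof.
elim: N f => [|N IH] f /=; first by rewrite big_seq1 /coin_weight big_nil mul1r.
rewrite big_cat !big_map !IH !mulr_sumr.
by congr (_ + _); apply: eq_bigr => w _; rewrite /coin_weight big_cons /=; ring.
Qed.

Hypothesis p01 : 0 <= p <= 1.

Lemma ler_coin_expect N f g : (forall w, f w <= g w) -> coin_expect N f <= coin_expect N g.
Proof.
have [p_ge0 p_le1] := andP p01.
elim: N f g => [|N IH] f g fg //=.
by apply: lerD; apply: ler_wpM2l; rewrite ?subr_ge0 //; exact: IH.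
Qed.

Lemma coin_expect_indicator N (P : pred (seq bool)) :
  0 <= coin_expect N (fun w => (P w)%:R) <= 1.
Proof.
apply/andP; split.
  by rewrite -(coin_expect_cst N 0); apply: ler_coin_expect => w; case: (P w).
by rewrite -[leRHS](coin_expect_cst N); apply: ler_coin_expect => w; case: (P w).
Qed.

End CoinExpectation.

Section LadderWalk.
Variable R : realType.
Implicit Types (a b : R) (z : R * bool) (w : seq bool).

(* A state is the current position together with whether the last step went
   up: an up-step that follows an up-step has length 2. *)
Definition ladder_move z (c : bool) : R * bool :=
  (z.1 + (if c then (if z.2 then 2 else 1) else -1), c).

Definition ladder_walk z w : R * bool := foldl ladder_move z w.

Definition ladder_start : R * bool := (0, false).

Definition in_window a b z : bool := - a < z.1 < b.

Fixpoint stopped_walk a b z w : R * bool :=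
  if w is c :: w' then (if in_window a b z then stopped_walk a b (ladder_move z c) w' else z)
  else z.

Lemma stopped_walk_prefix a b z w :
  exists2 n, (n <= size w)%N & stopped_walk a b z w = ladder_walk z (take n w).
Proof.
elim: w z => [|c w IH] z /=; first by exists 0%N.
case: (in_window a b z); last by exists 0%N.
by have [n le_n_w ->] := IH (ladder_move z c); exists n.+1.
Qed.

Lemma stopped_walk_range a b z w : - a - 1 < z.1 < b + 2 ->
  - a - 1 < (stopped_walk a b z w).1 < b + 2.
Proof.
elim: w z => [|c w IH] z //= z_range.
case ab_z: (in_window a b z) => //; apply: IH.
move: ab_z; rewrite /in_window /ladder_move /= => /andP[lt_az lt_zb].
by case: c; case: z.2 in lt_az lt_zb *; apply/andP; split; lra.
Qed.

End LadderWalk.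

Arguments ladder_start {R}.

Section Potential.
Variables (R : realType) (p : R).
Hypotheses (p_root : p ^+ 2 + 2 * p = 1) (p01 : 0 <= p <= 1).
Implicit Types (z : R * bool) (w : seq bool).

(* The choice p^2 + 2p = 1 is exactly what makes this potential a martingale. *)
Definition ladder_potential z : R := z.1 + (if z.2 then p else 0).
Local Notation V := ladder_potential.

Lemma ladder_potential_mean z :
  p * V (ladder_move z true) + (1 - p) * V (ladder_move z false) = V z.
Proof. by have := p_root; case: z => u [] /=; rewrite /V /=; lra. Qed.

Lemma ladder_potential_sq z :
  V z ^+ 2 + 1 <= p * V (ladder_move z true) ^+ 2 + (1 - p) * V (ladder_move z false) ^+ 2.
Proof.
have [p_ge0 p_le1] := andP p01.
case: z => u s; rewrite /V /ladder_move /=.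
have root_u : u * (p ^+ 2 + 2 * p - 1) = 0 by rewrite p_root subrr mulr0.
have root_p : p * (p ^+ 2 + 2 * p - 1) = 0 by rewrite p_root subrr mulr0.
by case: s; nra.
Qed.

Variables a b : R.
Local Notation Vstop z w := (V (stopped_walk a b z w)).
Local Notation still_in_window z w := ((in_window a b (stopped_walk a b z w))%:R : R).

Lemma coin_expect_stopped_potential N z : coin_expect p N (fun w => Vstop z w) = V z.
Proof.
elim: N z => [|N IH] z //=; case: (in_window a b z).
  by rewrite !IH ladder_potential_mean.
by rewrite !coin_expect_cst; ring.
Qed.

(* Every step taken inside the window adds at least 1 to E[V^2], and being inside at
   time N means that all N steps were taken inside. *)
Lemma coin_expect_stopped_potential_sq N z :
  V z ^+ 2 + N%:R * coin_expect p N (fun w => still_in_window z w)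
  <= coin_expect p N (fun w => Vstop z w ^+ 2).
Proof.
have [p_ge0 p_le1] := andP p01.
elim: N z => [|N IH] z /=; first by rewrite mul0r addr0.
case ab_z: (in_window a b z); last by rewrite !coin_expect_cst ab_z !mulr0 addr0; lra.
have /andP[_ le1_t] := coin_expect_indicator p01 N
  (fun w => in_window a b (stopped_walk a b (ladder_move z true) w)).
have /andP[_ le1_f] := coin_expect_indicator p01 N
  (fun w => in_window a b (stopped_walk a b (ladder_move z false) w)).
have IH_t := IH (ladder_move z true); have IH_f := IH (ladder_move z false).
have step := ladder_potential_sq z.
rewrite -natr1; have N_ge0 : 0 <= (N%:R : R) by [].
move: le1_t le1_f IH_t IH_f step.
set et := coin_expect _ _ _; set ef := coin_expect _ _ _.
set qt := coin_expect _ _ _; set qf := coin_expect _ _ _.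
by nra.
Qed.

Hypotheses (a_gt0 : 0 < a) (b_gt0 : 0 < b).
Local Notation exit_state w := (stopped_walk a b ladder_start w).
Local Notation exit_low N := (coin_expect p N (fun w => ((exit_state w).1 <= - a)%R%:R)).
Local Notation exit_high N := (coin_expect p N (fun w => (b <= (exit_state w).1)%R%:R)).
Local Notation exit_none N := (coin_expect p N (fun w => still_in_window ladder_start w)).

Let exit_range w : - a - 1 < (exit_state w).1 < b + 2.
Proof. by apply: stopped_walk_range; have := a_gt0; have := b_gt0; rewrite /= => ? ?; lra. Qed.

Let potential_exit_range w : 0 <= V (exit_state w) - (exit_state w).1 <= p.
Proof. by have [p_ge0 p_le1] := andP p01; rewrite /V; case: (_.2); apply/andP; split; lra. Qed.

Let potential_start : V ladder_start = 0.
Proof. by rewrite /V /= addr0. Qed.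

Lemma exit_low_bound N : a * exit_low N <= b + 3.
Proof.
have [p_ge0 p_le1] := andP p01.
have /andP[low_ge0 _] := coin_expect_indicator p01 N (fun w => (exit_state w).1 <= - a).
have V_le w : V (exit_state w) <= (b + 2 + p) + (- (a + b + 2)) * ((exit_state w).1 <= - a)%R%:R.
  have := exit_range w; have := potential_exit_range w.
  by case: (lerP _ (- a)) => ? /andP[? ?] /andP[? ?] /=; lra.
have := ler_coin_expect p01 N V_le; have := b_gt0.
by rewrite coin_expect_stopped_potential potential_start coin_expectD coin_expect_cst coin_expectZ; nra.
Qed.

Lemma exit_high_bound N : b * exit_high N <= a + 1.
Proof.
have /andP[high_ge0 _] := coin_expect_indicator p01 N (fun w => b <= (exit_state w).1).
have V_ge w : (- a - 1) + (a + b + 1) * (b <= (exit_state w).1)%R%:R <= V (exit_state w).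
  have := exit_range w; have := potential_exit_range w.
  by case: (lerP b) => ? /andP[? ?] /andP[? ?] /=; lra.
have := ler_coin_expect p01 N V_ge; have := a_gt0.
by rewrite coin_expect_stopped_potential potential_start coin_expectD coin_expect_cst coin_expectZ; nra.
Qed.

Lemma exit_none_bound N : N%:R * exit_none N <= (a + b + 3) ^+ 2.
Proof.
have := coin_expect_stopped_potential_sq N ladder_start.
rewrite potential_start expr0n add0r => /le_trans; apply.
rewrite -[leRHS](coin_expect_cst p N); apply: ler_coin_expect => // w.
have [p_ge0 p_le1] := andP p01; have := a_gt0; have := b_gt0.
have /andP[? ?] := exit_range w; have /andP[? ?] := potential_exit_range w.
move=> ? ?; have /andP[? ?] : - (a + b + 3) <= V (exit_state w) <= a + b + 3.
  by apply/andP; split; lra.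
nra.
Qed.

Lemma exit_partition N : exit_high N + exit_low N + exit_none N = 1.
Proof.
rewrite -!coin_expectD -[RHS](coin_expect_cst p N); congr coin_expect; apply: funext => w.
rewrite /in_window; case: (lerP b _) => ?; case: (lerP _ (- a)) => ? /=.
all: by have := a_gt0; have := b_gt0; lra.
Qed.

Lemma exit_high_ge N : (0 < N)%N -> 1 - (b + 3) / a - (a + b + 3) ^+ 2 / N%:R <= exit_high N.
Proof.
move=> N_gt0; have := exit_partition N.
have : exit_low N <= (b + 3) / a by rewrite ler_pdivlMr // mulrC exit_low_bound.
have : exit_none N <= (a + b + 3) ^+ 2 / N%:R.
  by rewrite ler_pdivlMr ?ltr0n // mulrC exit_none_bound.
lra.
Qed.

Lemma exit_low_ge N : (0 < N)%N -> 1 - (a + 1) / b - (a + b + 3) ^+ 2 / N%:R <= exit_low N.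
Proof.
move=> N_gt0; have := exit_partition N.
have : exit_high N <= (a + 1) / b by rewrite ler_pdivlMr // mulrC exit_high_bound.
have : exit_none N <= (a + b + 3) ^+ 2 / N%:R.
  by rewrite ler_pdivlMr ?ltr0n // mulrC exit_none_bound.
lra.
Qed.

End Potential.

Lemma oppr1_eq1F (R : numDomainType) : (-1 == 1 :> R) = false.
Proof. by rewrite lt_eqF // (lt_trans ltrN10 ltr01). Qed.

Definition up_word {T : Type} {R : realType} (xi : nat -> T -> R) (n : nat) (t : T) : seq bool :=
  [seq xi i t == 1 | i <- iota 0 n].

Section UpWord.
Context {T : Type} {R : realType} (xi : nat -> T -> R).
Hypothesis xi_pm1 : forall i t, xi i t = 1 \/ xi i t = -1.

Lemma size_up_word n t : size (up_word xi n t) = n.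
Proof. by rewrite size_map size_iota. Qed.

Lemma take_up_word N n t : (n <= N)%N -> take n (up_word xi N t) = up_word xi n t.
Proof. by move=> le_nN; rewrite /up_word -map_take take_iota (minn_idPl le_nN). Qed.

Lemma up_word_cylinder N w : size w = N ->
  [set t | up_word xi N t = w] =
  \bigcap_(i in [set i | (i < N)%N]) (xi i @^-1` [set if nth false w i then 1 else -1]).
Proof.
have nth_up_word t i : (i < N)%N -> nth false (up_word xi N t) i = (xi i t == 1).
  by move=> lt_iN; rewrite (nth_map 0%N) ?size_iota // nth_iota.
move=> size_w; apply/seteqP; split => t /=.
  move=> <- i /= lt_iN; rewrite nth_up_word //.
  by case: (xi_pm1 i t) => ->; rewrite ?eqxx ?oppr1_eq1F.
move=> xi_w; apply: (@eq_from_nth _ false); first by rewrite size_up_word size_w.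
move=> i; rewrite size_up_word => lt_iN; rewrite nth_up_word // (xi_w i lt_iN).
by case: (nth false w i); rewrite ?eqxx ?oppr1_eq1F.
Qed.

Lemma ladder_walk_up_word n t :
  ladder_walk ladder_start (up_word xi n t) =
  (ladder_sum 2 2 xi n t, if n is n'.+1 then xi n' t == 1 else false).
Proof.
elim: n => [|n IH]; first by rewrite /ladder_sum big_ord0.
rewrite /up_word -addn1 iotaD map_cat cats1 /ladder_walk foldl_rcons.
rewrite -/(up_word xi n t) -/(ladder_walk _ _) IH.
rewrite /ladder_sum addn1 big_ord_recr /= -/(ladder_sum 2 2 xi n t); congr (_ + _, _).
rewrite /ladder_step; case: (xi_pm1 n t) => xi_n; rewrite xi_n ?(eq_sym 1) ?eqxx ?oppr1_eq1F //=.
case: n {IH} xi_n => [|n] //= xi_n1.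
suff -> : [forall j : 'I_2, xi (n.+1 - j)%N t == 1] = (xi n t == 1) by [].
apply/forallP/idP => [all_up | up_n [[|[|j]] //= _]].
- by have := all_up (Ordinal (isT : (1 < 2)%N)); rewrite /= subSS subn0.
- by rewrite subn0 xi_n1 eqxx.
- by rewrite subn1.
Qed.

Lemma ladder_sum_reached a b N t (c : R -> bool) : c 0 = false ->
  c (stopped_walk a b ladder_start (up_word xi N t)).1 ->
  exists2 n, (0 < n)%N & c (ladder_sum 2 2 xi n t).
Proof.
move=> c0; have [n le_nN ->] := stopped_walk_prefix a b ladder_start (up_word xi N t).
rewrite size_up_word in le_nN; rewrite take_up_word // ladder_walk_up_word.
by case: n {le_nN} => [|n] /=; [rewrite /ladder_sum big_ord0 c0 | exists n.+1].
Qed.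

End UpWord.

Section LadderProbability.
Context {d : measure_display} {T : measurableType d} {R : realType}.
Context (P : probability T R) (p : R) (xi : nat -> T -> R).
Hypothesis xi_iid : iid_pm1 P p xi.

Let xi_meas : forall i, measurable_fun setT (xi i). Proof. by case: xi_iid. Qed.
Let xi_pm1 : forall i t, xi i t = 1 \/ xi i t = -1. Proof. by case: xi_iid. Qed.

Let measurable_xi_eq i (r : R) : measurable (xi i @^-1` [set r]).
Proof. by rewrite -(setTI (_ @^-1` _)); exact: xi_meas. Qed.

Lemma prob_up_word_eq N w : size w = N ->
  measurable [set t | up_word xi N t = w] /\ P [set t | up_word xi N t = w] = (coin_weight p w)%:E.
Proof.
case: xi_iid => _ _ prob_up xi_indep size_w; rewrite (up_word_cylinder xi_pm1 size_w).
split; first by apply: bigcap_measurableType => i _; exact: measurable_xi_eq.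
have prob_xi_eq i : P (xi i @^-1` [set if nth false w i then 1 else -1]) =
    (if nth false w i then p else 1 - p)%:E.
  case: (nth false w i); first exact: prob_up.
  have -> : xi i @^-1` [set -1] = ~` (xi i @^-1` [set 1]).
    apply/seteqP; split => t /=; first by move=> ->; apply/eqP; rewrite oppr1_eq1F.
    by case: (xi_pm1 i t).
  by rewrite probability_setC ?prob_up ?EFinB.
rewrite xi_indep; last by move=> i; exact: measurable_set1.
under eq_bigr => i _ do rewrite prob_xi_eq.
by rewrite prodEFin /coin_weight (big_nth false) big_mkord size_w.
Qed.

Lemma prob_up_word_in N (ws : seq (seq bool)) : uniq ws -> all (fun w => size w == N) ws ->
  measurable [set t | up_word xi N t \in ws] /\
  P [set t | up_word xi N t \in ws] = (\sum_(w <- ws) coin_weight p w)%:E.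
Proof.
elim: ws => [|w ws IH] /=.
  have -> : [set t | up_word xi N t \in [::]] = set0 by apply/seteqP; split => t.
  by rewrite big_nil measure0.
move=> /andP[w_ws uniq_ws] /andP[/eqP size_w size_ws].
have [meas_ws prob_ws] := IH uniq_ws size_ws.
have [meas_w prob_w] := prob_up_word_eq size_w.
have -> : [set t | up_word xi N t \in w :: ws] =
    [set t | up_word xi N t = w] `|` [set t | up_word xi N t \in ws].
  apply/seteqP; split => t /=; rewrite in_cons; first by case/orP => [/eqP|]; [left | right].
  by case=> [->|->]; rewrite ?eqxx ?orbT.
split; first exact: measurableU.
rewrite measureU //; first by rewrite big_cons EFinD; congr (_ + _)%E.
by apply/seteqP; split => t //= [up_w w_in]; rewrite -up_w w_in in w_ws.
Qed.

Lemma prob_up_word_event N (g : pred (seq bool)) :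
  measurable [set t | g (up_word xi N t)] /\
  P [set t | g (up_word xi N t)] = (coin_expect p N (fun w => (g w)%:R))%:E.
Proof.
have -> : [set t | g (up_word xi N t)] = [set t | up_word xi N t \in [seq w <- bool_seqs N | g w]].
  by apply/seteqP; split => t /=; rewrite mem_filter mem_bool_seqs size_up_word eqxx andbT.
have size_g : all (fun w => size w == N) ([seq w <- bool_seqs N | g w]).
  by apply/allP => w; rewrite mem_filter mem_bool_seqs => /andP[].
have [meas prob] := prob_up_word_in (filter_uniq g (bool_seqs_uniq N)) size_g.
split => //; rewrite prob coin_expectE big_filter big_mkcond /=.
by congr (_%:E); apply: eq_bigr => w _; case: (g w); rewrite ?mulr1 ?mulr0.
Qed.

Lemma measurable_ladder_sum_event (c : R -> bool) n :
  measurable [set t | c (ladder_sum 2 2 xi n t)].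
Proof.
have [meas _] := prob_up_word_event n (fun w => c (ladder_walk ladder_start w).1).
by move: meas; congr measurable; apply/seteqP; split => t /=; rewrite ladder_walk_up_word.
Qed.

Lemma measurable_ladder_reach (c : R -> bool) :
  measurable (\bigcup_(n in [set n | (0 < n)%N]) [set t | c (ladder_sum 2 2 xi n t)]).
Proof. by apply: bigcup_measurable => n _; exact: measurable_ladder_sum_event. Qed.

Lemma prob_ladder_reach_ge (c : R -> bool) a b N : c 0 = false ->
  ((coin_expect p N (fun w => (c (stopped_walk a b ladder_start w).1)%:R))%:E <=
   P (\bigcup_(n in [set n | (0 < n)%N]) [set t | c (ladder_sum 2 2 xi n t)]))%E.
Proof.
move=> c0; have [meas <-] := prob_up_word_event N (fun w => c (stopped_walk a b ladder_start w).1).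
apply: le_measure; rewrite ?inE //; first exact: measurable_ladder_reach.
by move=> t /= /(ladder_sum_reached xi_pm1 c0) [n n_gt0 c_n]; exists n.
Qed.

End LadderProbability.

Lemma probability1_of_lower_bounds {d : measure_display} {T : measurableType d} {R : realType}
    (P : probability T R) (U : set T) (c : R) (g : R -> R) : measurable U ->
  (forall (a : R) (N : nat), 0 < a -> (0 < N)%N -> ((1 - c / a - g a / N%:R)%:E <= P U)%E) ->
  P U = 1%E.
Proof.
move=> mU lb; apply/le_anti; rewrite probability_le1 //=.
apply/lee_subgt0Pr => e e_gt0; rewrite -EFinB.
pose a := 2 * `|c| / e + 1; pose N := (Num.truncn (2 * `|g a| / e)).+1.
have a_gt0 : 0 < a by rewrite /a ltr_wpDl // divr_ge0 // ltW.
apply: le_trans _ (lb a N a_gt0 isT); rewrite lee_fin.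
have c_small : c / a <= e / 2.
  rewrite ler_pdivrMr //.
  have -> : e / 2 * a = `|c| + e / 2 by rewrite /a; field; rewrite gt_eqF.
  by have := ler_norm c; lra.
have g_small : g a / N%:R <= e / 2.
  rewrite ler_pdivrMr ?ltr0n //; have := truncnS_gt (2 * `|g a| / e).
  by rewrite -/N ltr_pdivrMr // => ?; have := ler_norm (g a); lra.
lra.
Qed.

Theorem theorem4p3 (d : measure_display) (T : measurableType d) (R : realType)
    (P : probability T R) (xi : nat -> T -> R) (x : nat) :
  iid_pm1 P (Num.sqrt 2 - 1) xi ->
  (0 < x)%N ->
  P (\bigcup_(n in [set n | (0 < n)%N]) [set t | x%:R <= ladder_sum 2 2 xi n t]) = 1%E /\
  P (\bigcup_(n in [set n | (0 < n)%N]) [set t | ladder_sum 2 2 xi n t <= - x%:R]) = 1%E.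
Proof.
move=> xi_iid x_gt0; set p := Num.sqrt 2 - 1 in xi_iid.
have sqrt2_ge0 : 0 <= Num.sqrt (2 : R) := sqrtr_ge0 _.
have sqrt2_sq : Num.sqrt (2 : R) ^+ 2 = 2 by rewrite sqr_sqrtr // ler0n.
have p_root : p ^+ 2 + 2 * p = 1 by rewrite /p; nra.
have p01 : 0 <= p <= 1 by rewrite /p; apply/andP; split; nra.
have x_pos : (0 : R) < x%:R by rewrite ltr0n.
split.
- pose up (s : R) := x%:R <= s.
  apply: (probability1_of_lower_bounds (c := x%:R + 3) (g := fun a => (a + x%:R + 3) ^+ 2)).
    exact: (measurable_ladder_reach xi_iid up).
  move=> a N a_gt0 N_gt0; apply: le_trans _ (prob_ladder_reach_ge xi_iid (c := up) a x%:R N _).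
    by rewrite lee_fin; exact: exit_high_ge.
  by apply/negbTE; rewrite -ltNge.
- pose down (s : R) := s <= - x%:R.
  apply: (probability1_of_lower_bounds (c := x%:R + 1) (g := fun b => (x%:R + b + 3) ^+ 2)).
    exact: (measurable_ladder_reach xi_iid down).
  move=> b N b_gt0 N_gt0; apply: le_trans _ (prob_ladder_reach_ge xi_iid (c := down) x%:R b N _).
    by rewrite lee_fin; exact: exit_low_ge.
  by apply/negbTE; rewrite -ltNge oppr_lt0.
Qed.
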